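(* Let $Q\in\mathcal N_\kappa(\mathcal H)$ have the realization $Q(z)=Q(z_0)^*+(z-\overline{z_0})\Gamma^+\big(I+(z-z_0)(A-z)^{-1}\big)\Gamma$ with $Q(z_0)$ boundedly invertible, let $\widehat Q(z):=-Q(z)^{-1}$, $\Gamma_z:=\big(I+(z-z_0)(A-z)^{-1}\big)\Gamma$, $\widehat\Gamma:=\Gamma\widehat Q(z_0)=-\Gamma Q(z_0)^{-1}$, and let $\widehat A$ be the relation with $$(\widehat A-z)^{-1}=(A-z)^{-1}+\Gamma_z\widehat Q(z)\Gamma_{\overline z}^+ ,$$ so that $\widehat Q(z)=\widehat Q(z_0)^*+(z-\overline{z_0})\widehat\Gamma^+\big(I+(z-z_0)(\widehat A-z)^{-1}\big)\widehat\Gamma$. Define $\widehat\Gamma_z:=\big(I+(z-z_0)(\widehat A-z)^{-1}\big)\widehat\Gamma$. Then, for all $z\in\varrho(A)\cap\varrho(\widehat A)$ at which $Q(z)$ is boundedly invertible, $$\widehat\Gamma_z=\Gamma_z\widehat Q(z)\qquad\text{and}\qquad (A-z)^{-1}=(\widehat A-z)^{-1}+\widehat\Gamma_zQ(z)\widehat\Gamma_{\overline z}^+ .$$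
   Context: $\mathcal H$ is a Hilbert space. $Q\in\mathcal N_\kappa(\mathcal H)$: an $\mathcal L(\mathcal H)$-valued function meromorphic in $\mathbb C\setminus\mathbb R$, $Q(\overline z)^*=Q(z)$, whose kernel $\frac{Q(z)-Q(w)^*}{z-\overline w}$ on $\mathcal D(Q)\cap\mathbb C^+$ has exactly $\kappa$ negative squares. The realization consists of a Pontryagin space $(\mathcal K,[\cdot,\cdot])$, a self-adjoint linear relation $A$ in $\mathcal K$, a point $z_0\in\varrho(A)\cap\mathbb C^+$ and a bounded $\Gamma:\mathcal H\to\mathcal K$; $\Gamma^+$ denotes the adjoint with respect to the Pontryagin inner product. *)

From HB Require Import structures.
From mathcomp Require Import all_boot all_order all_algebra.
From mathcomp Require Import reals.
From mathcomp Require Import complex.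
From Stdlib Require Import ClassicalEpsilon.
Set Implicit Arguments. Unset Strict Implicit. Unset Printing Implicit Defensive.
Import Order.TTheory GRing.Theory Num.Theory.
Local Open Scope ring_scope.

Section Defs.
Variable R : realType.
Local Notation C := R[i].

Definition lin_map (X Y : lmodType C) (f : X -> Y) : Prop :=
  forall (a : C) (x y : X), f (a *: x + y) = a *: f x + f y.

Definition hermitian_form (X : lmodType C) (ip : X -> X -> C) : Prop :=
  (forall (a : C) (x y z : X), ip (a *: x + y) z = a * ip x z + ip y z) /\
  (forall x y : X, ip y x = (ip x y)^*).

Definition complete_on (X : lmodType C) (ip : X -> X -> C) (S : X -> Prop) : Prop :=
  forall u : nat -> X, (forall n, S (u n)) ->
    (forall e : R, 0 < e -> exists N : nat, forall m n : nat, (N <= m)%N -> (N <= n)%N ->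
        ip (u m - u n) (u m - u n) < (e%:C)%C) ->
    exists l : X, S l /\
      forall e : R, 0 < e -> exists N : nat, forall n : nat, (N <= n)%N ->
        ip (u n - l) (u n - l) < (e%:C)%C.

Definition hilbert (X : lmodType C) (ip : X -> X -> C) : Prop :=
  [/\ hermitian_form ip,
      (forall x : X, x != 0 -> 0 < ip x x) &
      complete_on ip (fun _ => True)].

(* ---------- Pontryagin space ----------
   P is the projection onto K+ along K- of a fundamental decomposition
   K = K+ [+] K-, with (K+, ip) a Hilbert space and (K-, -ip) a finite-dimensional
   Hilbert space. *)
Definition fundamental_proj (X : lmodType C) (ip : X -> X -> C) (P : X -> X) : Prop :=
  [/\ lin_map P /\ (forall x, P (P x) = P x),
      (forall x y, ip (P x) (y - P y) = 0),
      (forall x, P x = x -> x != 0 -> 0 < ip x x),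
      (forall x, P x = 0 -> x != 0 -> ip x x < 0) /\
      (exists (n : nat) (e : 'I_n -> X), forall x, exists c : 'I_n -> C,
          x - P x = \sum_(i < n) c i *: e i) &
      complete_on ip (fun x => P x = x)].

Definition pontryagin (X : lmodType C) (ip : X -> X -> C) : Prop :=
  hermitian_form ip /\ exists P, fundamental_proj ip P.

Definition jnorm2 (X : lmodType C) (ip : X -> X -> C) (P : X -> X) (x : X) : C :=
  ip (P x) (P x) - ip (x - P x) (x - P x).

(* bounded maps (w.r.t. the Hilbert norm of H, resp. a J-norm of K; all
   fundamental decompositions of a Pontryagin space give equivalent norms) *)
Definition bounded_HH (H : lmodType C) (ipH : H -> H -> C) (f : H -> H) : Prop :=
  exists M : R, forall x, ipH (f x) (f x) <= (M%:C)%C * ipH x x.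
Definition bounded_HK (H K : lmodType C) (ipH : H -> H -> C) (ipK : K -> K -> C)
  (f : H -> K) : Prop :=
  exists P, fundamental_proj ipK P /\
  exists M : R, forall x, jnorm2 ipK P (f x) <= (M%:C)%C * ipH x x.
Definition bounded_KK (K : lmodType C) (ipK : K -> K -> C) (f : K -> K) : Prop :=
  exists P, fundamental_proj ipK P /\
  exists M : R, forall x, jnorm2 ipK P (f x) <= (M%:C)%C * jnorm2 ipK P x.

Definition is_adj (X Y : lmodType C) (ipX : X -> X -> C) (ipY : Y -> Y -> C)
  (f : X -> Y) (g : Y -> X) : Prop := forall x y, ipY (f x) y = ipX x (g y).
Definition has_adj (X Y : lmodType C) (ipX : X -> X -> C) (ipY : Y -> Y -> C)
  (f : X -> Y) : Prop := exists g, is_adj ipX ipY f g.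
(* the adjoint f^+ (chosen; unique by nondegeneracy whenever it exists) *)
Definition adj (X Y : lmodType C) (ipX : X -> X -> C) (ipY : Y -> Y -> C)
  (f : X -> Y) : Y -> X :=
  epsilon (inhabits (fun _ => 0)) (is_adj ipX ipY f).

Definition is_inv (X : Type) (f g : X -> X) : Prop := cancel f g /\ cancel g f.
Definition bdd_invertible (H : lmodType C) (ipH : H -> H -> C) (f : H -> H) : Prop :=
  exists g, is_inv f g /\ lin_map g /\ bounded_HH ipH g.
Definition inv_op (X : Type) (f : X -> X) : X -> X :=
  epsilon (inhabits id) (is_inv f).

Definition linrel (K : lmodType C) (A : K -> K -> Prop) : Prop :=
  A 0 0 /\ forall (a : C) f g f' g', A f g -> A f' g' -> A (a *: f + f') (a *: g + g').
Definition selfadjoint (K : lmodType C) (ipK : K -> K -> C) (A : K -> K -> Prop) : Prop :=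
  forall f g, A f g <-> (forall h k, A h k -> ipK k f = ipK h g).
(* R is (the graph of) (A - z)^{-1} = {(g - z f, f) | (f,g) in A} *)
Definition is_resolvent (K : lmodType C) (A : K -> K -> Prop) (z : C) (Rz : K -> K) : Prop :=
  (forall f g, A f g -> Rz (g - z *: f) = f) /\ (forall k, A (Rz k) (k + z *: Rz k)).
Definition in_rho (K : lmodType C) (ipK : K -> K -> C) (A : K -> K -> Prop) (z : C) : Prop :=
  exists Rz, is_resolvent A z Rz /\ lin_map Rz /\ bounded_KK ipK Rz.
Definition resolv (K : lmodType C) (A : K -> K -> Prop) (z : C) : K -> K :=
  epsilon (inhabits id) (is_resolvent A z).

Definition Gam_z (H K : lmodType C) (A : K -> K -> Prop) (z0 : C) (Gam : H -> K) (z : C)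
  : H -> K := fun h => Gam h + (z - z0) *: resolv A z (Gam h).

Definition Qhat (H : lmodType C) (Q : C -> H -> H) (z : C) : H -> H :=
  fun h => - inv_op (Q z) h.

End Defs.

(* Everything rests on two consequences of the realization: for w in rho(A),
     Q(w) - Q(z0) = (w - z0) Gamma_{conj w}^+ Gamma,
   where Gamma_{conj w}^+ = Gamma^+ (I + (w - conj z0) (A - w)^{-1}), and
   Q(conj z) = Q(z)^+.  Substituting Gammahat = - Gamma Q(z0)^{-1} into the
   resolvent formula for Ahat, the first one gives Gammahat_w = Gamma_w Qhat(w)
   for w = z and w = conj z; hence Gammahat_z Q(z) Gammahat_{conj z}^+ equals
   - Gamma_z Qhat(z) Gamma_{conj z}^+ and cancels the correction term of
   (Ahat - z)^{-1}.
   The analytic input is the existence of adjoints: of (A - z)^{-1}, which is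
   then (A - conj z)^{-1}, so that conj z lies in rho(A), and of Q(z)^{-1}, so
   that Q(conj z) is boundedly invertible.  Both come from Riesz representation
   theorems: in a Hilbert space, by minimising [x,x] - 2 Re phi(x) over a
   complete subspace; in a Pontryagin space, by combining that with the
   finite-dimensional case on the negative part of a fundamental decomposition. *)

From mathcomp Require Import all_boot all_order all_algebra.
From mathcomp Require Import reals complex.
From mathcomp Require Import ring.
From Stdlib Require Import ClassicalEpsilon FunctionalExtensionality.
Set Implicit Arguments. Unset Strict Implicit. Unset Printing Implicit Defensive.
Import Order.TTheory GRing.Theory Num.Theory.
Local Open Scope ring_scope.

Section Basics.
Variable R : realType.
Local Notation C := R[i].
Local Notation rc := (real_complex R).

Section LinearMaps.
Variables (X Y : lmodType C) (f : X -> Y) (f_lin : lin_map f).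

Lemma lin0 : f 0 = 0.
Proof.
by have := f_lin 1 0 0; rewrite !scale1r !addr0 => h; apply: (addrI (f 0)); rewrite addr0 -h.
Qed.

Lemma linD x y : f (x + y) = f x + f y.
Proof. by rewrite -{1}(scale1r x) f_lin scale1r. Qed.

Lemma linZ a x : f (a *: x) = a *: f x.
Proof. by rewrite -(addr0 (a *: x)) f_lin lin0 addr0. Qed.

Lemma linN x : f (- x) = - f x.
Proof. by rewrite -scaleN1r linZ scaleN1r. Qed.

Lemma linB x y : f (x - y) = f x - f y.
Proof. by rewrite linD linN. Qed.

Lemma lin_sum n (c : 'I_n -> C) (e : 'I_n -> X) :
  f (\sum_i c i *: e i) = \sum_i c i *: f (e i).
Proof.
by rewrite (big_morph f linD lin0); apply: eq_bigr => i _; apply: linZ.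
Qed.

End LinearMaps.

Definition lin_functional (X : lmodType C) (phi : X -> C) : Prop :=
  forall (a : C) (x y : X), phi (a *: x + y) = a * phi x + phi y.

Section LinearFunctionals.
Variables (X : lmodType C) (phi : X -> C) (phi_lin : lin_functional phi).

Lemma lfun0 : phi 0 = 0.
Proof.
have := phi_lin 1 0 0; rewrite scale1r addr0 mul1r => h.
by apply: (addrI (phi 0)); rewrite addr0 -h.
Qed.

Lemma lfunD x y : phi (x + y) = phi x + phi y.
Proof. by rewrite -{1}(scale1r x) phi_lin mul1r. Qed.

Lemma lfunZ a x : phi (a *: x) = a * phi x.
Proof. by rewrite -(addr0 (a *: x)) phi_lin lfun0 addr0. Qed.

Lemma lfunN x : phi (- x) = - phi x.
Proof. by rewrite -scaleN1r lfunZ mulN1r. Qed.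

End LinearFunctionals.

Definition nondegenerate (X : lmodType C) (ip : X -> X -> C) : Prop :=
  forall u v, (forall x, ip x u = ip x v) -> u = v.

Section HermitianForms.
Variables (X : lmodType C) (ip : X -> X -> C) (hip : hermitian_form ip).

Lemma form_lfun z : lin_functional (ip^~ z).
Proof. by case: hip => lin_l _ a x y; apply: lin_l. Qed.

Lemma ipC x y : ip y x = (ip x y)^*. Proof. by case: hip. Qed.

Lemma ip0l z : ip 0 z = 0. Proof. exact: (lfun0 (form_lfun z)). Qed.
Lemma ipDl x y z : ip (x + y) z = ip x z + ip y z. Proof. exact: (lfunD (form_lfun z)). Qed.
Lemma ipZl a x z : ip (a *: x) z = a * ip x z. Proof. exact: (lfunZ (form_lfun z)). Qed.
Lemma ipNl x z : ip (- x) z = - ip x z. Proof. exact: (lfunN (form_lfun z)). Qed.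
Lemma ipBl x y z : ip (x - y) z = ip x z - ip y z. Proof. by rewrite ipDl ipNl. Qed.

Lemma ip0r z : ip z 0 = 0. Proof. by rewrite ipC ip0l conjC0. Qed.
Lemma ipDr x y z : ip z (x + y) = ip z x + ip z y.
Proof. by rewrite ipC ipDl rmorphD /= -!ipC. Qed.
Lemma ipZr a x z : ip z (a *: x) = a^* * ip z x.
Proof. by rewrite ipC ipZl rmorphM /= -ipC. Qed.
Lemma ipNr x z : ip z (- x) = - ip z x.
Proof. by rewrite ipC ipNl rmorphN /= -ipC. Qed.
Lemma ipBr x y z : ip z (x - y) = ip z x - ip z y.
Proof. by rewrite ipDr ipNr. Qed.

Lemma oppform_herm : hermitian_form (fun x y => - ip x y).
Proof.
split; last by move=> x y; rewrite ipC rmorphN.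
by move=> a x y z; rewrite ipDl ipZl; ring.
Qed.

Lemma pos_form_nondeg : (forall x, x != 0 -> 0 < ip x x) -> nondegenerate ip.
Proof.
move=> pos u v uv; apply/eqP; rewrite -subr_eq0; apply/negPn/negP => /pos.
by rewrite ipBr uv subrr ltxx.
Qed.

Lemma ip_real x : ip x x \is Num.real.
Proof. by apply/CrealP; rewrite -ipC. Qed.

Lemma cauchy_schwarz x y :
  (forall a b : C, 0 <= ip (a *: x + b *: y) (a *: x + b *: y)) ->
  ip x y * (ip x y)^* <= ip x x * ip y y.
Proof.
move=> hpos.
set A := ip x x; set B := ip y y; set c := ip x y.
have hA : A^* = A by apply/CrealP/ip_real.
have hyx : ip y x = c^* by rewrite ipC.
have A0 : 0 <= A by have := hpos 1 0; rewrite scale0r addr0 scale1r.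
have B0 : 0 <= B by have := hpos 0 1; rewrite scale0r add0r scale1r.
have expand a b : ip (a *: x + b *: y) (a *: x + b *: y) =
   a * a^* * A + a * b^* * c + b * a^* * c^* + b * b^* * B.
  by rewrite !ipDl !ipDr !ipZl !ipZr -/A -/B -/c hyx; ring.
have [/eqP A_eq0 | A_neq0] := boolP (A == 0); last first.
  have Apos : 0 < A by rewrite lt_def A_neq0 A0.
  have := hpos (- c^*) A; rewrite expand rmorphN /= conjCK hA.
  have -> : - c^* * - c * A + - c^* * A * c + A * - c * c^* + A * A * B =
     A * (A * B - c * c^*) by ring.
  by rewrite pmulr_rge0 // subr_ge0.
have [/eqP -> | c_neq0] := boolP (c == 0); first by rewrite mul0r A_eq0 mul0r.
(* If [A = 0] and [c != 0], the form at [k c^* x + y] is [2 k |c|^2 + B], which is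
   negative for a suitable real [k]. *)
exfalso.
have q_gt0 : 0 < c * c^* by rewrite mul_conjC_gt0.
set q := c * c^* in q_gt0.
set k := - ((B + 1) / (2 * q)).
have hk : k^* = k.
  have [B_real q_real] := (ger0_real B0, ger0_real (ltW q_gt0)); clearbody q.
  by apply/CrealP; rewrite /k rpredN rpred_div ?rpredD ?rpredM ?rpred1 ?rpred_nat.
have := hpos (k * c^*) 1; rewrite expand A_eq0 !mulr0 add0r conjC1 !mulr1 !mul1r.
rewrite rmorphM /= conjCK hk.
have -> : k * c^* * c + k * c * c^* + B = -1.
  have -> : k * c^* * c + k * c * c^* = 2 * k * q by rewrite /q; ring.
  by rewrite /k; field; rewrite gt_eqF.
by rewrite oppr_ge0 ler10.
Qed.

End HermitianForms.

Lemma normC2_add_le (a b : C) :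
  (a + b) * (a + b)^* <= 2%:R * (a * a^*) + 2%:R * (b * b^*).
Proof.
rewrite -subr_ge0.
have -> : 2%:R * (a * a^*) + 2%:R * (b * b^*) - (a + b) * (a + b)^* = (a - b) * (a - b)^*.
  by rewrite !rmorphD !rmorphN /=; ring.
exact: mul_conjC_ge0.
Qed.

Lemma conj_realC (r : R) : (rc r)^* = rc r.
Proof. by apply/CrealP/complex_realP; exists r. Qed.

Lemma nonneg_small_eq0 (q : C) :
  0 <= q -> (forall e : R, 0 < e -> q < rc e) -> q = 0.
Proof.
move=> q_ge0 small; rewrite -(RRe_real (ger0_real q_ge0)).
have Req_ge0 : 0 <= complex.Re q by rewrite -lecR (RRe_real (ger0_real q_ge0)).
case: (ltrgt0P (complex.Re q)) Req_ge0 => [Re_gt0 _ | //|-> _]; last by rewrite rmorph0.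
by have := small _ Re_gt0; rewrite (RRe_real (ger0_real q_ge0)) ltxx.
Qed.

Lemma inv_succ_small (e k : R) : 0 < e -> 0 <= k ->
  exists N, forall n, (N <= n)%N -> rc k * (n.+1%:R)^-1 < rc e.
Proof.
move=> e_gt0 k_ge0; exists (Num.truncn (k / e)) => n hn.
rewrite -(rmorph_nat (real_complex R)) -fmorphV -rmorphM ltcR.
have : k / e < n.+1%:R.
  by apply: lt_le_trans (truncnS_gt _) _; rewrite ler_nat ltnS.
by rewrite ltr_pdivrMr ?ltr0Sn // mulrC -ltr_pdivrMr.
Qed.

End Basics.

(** * Riesz representation *)

Section RieszComplete.
Variable R : realType.
Local Notation C := R[i].
Local Notation rc := (real_complex R).
Variables (X : lmodType C) (ip : X -> X -> C) (hip : hermitian_form ip).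
Variables (S : X -> Prop) (S0 : S 0)
  (S_lin : forall a x y, S x -> S y -> S (a *: x + y))
  (S_pos : forall x, S x -> 0 <= ip x x) (S_complete : complete_on ip S).
Variables (phi : X -> C) (phi_lin : lin_functional phi) (M : R)
  (phi_bdd : forall x, S x -> phi x * (phi x)^* <= rc M * ip x x).

Lemma subspaceD x y : S x -> S y -> S (x + y).
Proof. by move=> Sx Sy; have := S_lin 1 Sx Sy; rewrite scale1r. Qed.

Lemma subspaceZ a x : S x -> S (a *: x).
Proof. by move=> Sx; have := S_lin a Sx S0; rewrite addr0. Qed.

Lemma subspaceB x y : S x -> S y -> S (x - y).
Proof. by move=> Sx Sy; rewrite -scaleN1r; apply: subspaceD => //; apply: subspaceZ. Qed.

Let M1 := Num.max M 1.

Let M1_gt0 : 0 < rc M1.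
Proof. by rewrite -(rmorph0 (real_complex R)) ltcR lt_max ltr01 orbT. Qed.

Let phi_bdd1 x : S x -> phi x * (phi x)^* <= rc M1 * ip x x.
Proof.
move=> Sx; apply: le_trans (phi_bdd Sx) _.
by rewrite ler_wpM2r ?S_pos // lecR le_max lexx.
Qed.

Definition energy x := ip x x - phi x - (phi x)^*.

Lemma energy_real x : energy x \is Num.real.
Proof. by apply/CrealP; rewrite /energy !rmorphB /= conjCK -(ipC hip); ring. Qed.

Lemma energy_lb x : S x -> - rc M1 <= energy x.
Proof.
move=> Sx; set p := phi x; set m := rc M1.
have m_p : m * (p + p^*) <= p * p^* + m * m.
  have := mul_conjC_ge0 (p - m); rewrite -subr_ge0.
  have -> : (p - m) * (p - m)^* - 0 = p * p^* + m * m - m * (p + p^*).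
    by rewrite rmorphB /= conj_realC; ring.
  by rewrite subr_ge0.
have m_x : m * (p + p^*) <= m * ip x x + m * m.
  by apply: le_trans m_p _; rewrite lerD2r phi_bdd1.
have : p + p^* <= ip x x + m by rewrite -(ler_pM2l M1_gt0) (mulrDr m (ip x x)).
rewrite -subr_ge0 => h; rewrite -subr_ge0.
by have -> : energy x - - m = ip x x + m - (p + p^*) by rewrite /energy -/p; ring.
Qed.

Let energies : R -> Prop := fun r => exists2 x, S x & energy x = rc r.

Lemma energies_has_inf : classical_sets.has_inf energies.
Proof.
split; first by exists (complex.Re (energy 0)), 0; rewrite ?RRe_real ?energy_real.
exists (- M1) => r [x Sx Ex].
by rewrite -lecR rmorphN -Ex; apply: energy_lb.
Qed.

Definition energy_inf := inf energies.

Lemma energy_inf_le x : S x -> rc energy_inf <= energy x.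
Proof.
move=> Sx; rewrite -(RRe_real (energy_real x)) lecR.
case: energies_has_inf => _ lb; apply: (ge_inf lb).
by exists x; rewrite ?RRe_real ?energy_real.
Qed.

Lemma min_seq_ex n : exists x, S x /\ energy x < rc energy_inf + (n.+1%:R)^-1.
Proof.
have eps_gt0 : 0 < (n.+1%:R : R)^-1 by rewrite invr_gt0 ltr0Sn.
have [r [x Sx Ex] r_lt] := inf_adherent eps_gt0 energies_has_inf.
by exists x; rewrite Ex -(rmorph_nat (real_complex R)) -fmorphV -rmorphD ltcR.
Qed.

Definition min_seq n := proj1_sig (constructive_indefinite_description _ (min_seq_ex n)).
Local Notation u := min_seq.

Lemma min_seq_in n : S (u n).
Proof. by rewrite /u; case: constructive_indefinite_description => x []. Qed.

Lemma min_seq_energy n : energy (u n) < rc energy_inf + (n.+1%:R)^-1.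
Proof. by rewrite /u; case: constructive_indefinite_description => x []. Qed.

Lemma energy_parallelogram x y : ip (x - y) (x - y) =
  2%:R * energy x + 2%:R * energy y - 4%:R * energy ((2%:R)^-1 *: (x + y)).
Proof.
rewrite /energy (lfunZ phi_lin) (lfunD phi_lin) !(ipZl hip, ipZr hip).
rewrite !(ipDl hip, ipDr hip, ipBl hip, ipBr hip).
have half_real : ((2%:R)^-1 : C)^* = (2%:R)^-1 by apply/CrealP; rewrite rpredV rpred_nat.
by rewrite !rmorphM !rmorphD /= half_real; field.
Qed.

Lemma min_seq_dist m n :
  ip (u m - u n) (u m - u n) < 2%:R * (m.+1%:R)^-1 + 2%:R * (n.+1%:R)^-1.
Proof.
rewrite energy_parallelogram.
have mid := energy_inf_le (subspaceZ (2%:R^-1) (subspaceD (min_seq_in m) (min_seq_in n))).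
have [em en] := (min_seq_energy m, min_seq_energy n).
set d := rc energy_inf in mid em en *.
have -> : 2%:R * (m.+1%:R)^-1 + 2%:R * (n.+1%:R)^-1 =
   2%:R * (d + (m.+1%:R)^-1) + 2%:R * (d + (n.+1%:R)^-1) - 4%:R * d :> C by ring.
apply: ltr_leD; first apply: ltr_leD.
- by rewrite ltr_pM2l ?ltr0Sn.
- by rewrite ler_pM2l ?ltr0Sn // ltW.
- by rewrite lerN2 ler_pM2l ?ltr0Sn.
Qed.

Lemma min_seq_cauchy (e : R) : 0 < e -> exists N : nat, forall m n : nat,
  (N <= m)%N -> (N <= n)%N -> ip (u m - u n) (u m - u n) < rc e.
Proof.
move=> e_gt0.
have e2_gt0 : 0 < e / 2%:R by rewrite divr_gt0 ?ltr0Sn.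
have [N hN] := inv_succ_small e2_gt0 (ler0n _ 2).
exists N => m n hm hn; apply: lt_trans (min_seq_dist m n) _.
rewrite [e]splitr rmorphD /=.
by apply: ltrD; rewrite -(rmorph_nat (real_complex R) 2); apply: hN.
Qed.

Lemma energy_shift x v t : energy (x + t *: v) =
  energy x + t * (ip v x - phi v) + t^* * (ip x v - (phi v)^*) + t * t^* * ip v v.
Proof.
rewrite /energy (lfunD phi_lin) (lfunZ phi_lin) !(ipDl hip, ipDr hip).
by rewrite !(ipZl hip, ipZr hip) !rmorphD !rmorphM /=; ring.
Qed.

(* [u n] almost minimises [energy], so [energy] cannot decrease much along the line
   through [u n] in direction [v]. *)
Lemma min_seq_variation n v : S v ->
  (ip v (u n) - phi v) * (ip v (u n) - phi v)^* <= (ip v v + 1) * (n.+1%:R)^-1.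
Proof.
move=> Sv; set a := ip v (u n) - phi v; set V := ip v v; set q := a * a^*.
have V1_gt0 : 0 < V + 1 by rewrite ltr_wpDl ?ltr01 ?S_pos.
set s := (V + 1)^-1.
have s_gt0 : 0 < s by rewrite invr_gt0.
have s_real : s^* = s.
  by apply/CrealP; rewrite rpredV rpredD ?rpred1 ?ger0_real ?S_pos.
have q_ge0 : 0 <= q := mul_conjC_ge0 a.
set t := - (s * a^*).
have := energy_inf_le (S_lin t Sv (min_seq_in n)); rewrite addrC energy_shift -/V.
have -> : ip (u n) v - (phi v)^* = a^* by rewrite /a rmorphB /= -(ipC hip).
have -> : energy (u n) + t * a + t^* * a^* + t * t^* * V =
    energy (u n) - s * q - s * s * q.
  have sV : s * V = 1 - s by rewrite /s; field; rewrite gt_eqF.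
  rewrite /t rmorphN rmorphM /= s_real conjCK /q.
  have -> : energy (u n) + - (s * a^*) * a + - (s * a) * a^* +
      - (s * a^*) * - (s * a) * V =
    energy (u n) - (2%:R * s * (a * a^*)) + s * (s * V) * (a * a^*) by ring.
  by rewrite sV; ring.
move=> inf_le.
have sq_lt : s * q + s * s * q < (n.+1%:R)^-1.
  rewrite -(ltrD2l (rc energy_inf)); apply: le_lt_trans (min_seq_energy n).
  by rewrite addrA -!lerBrDr addrAC.
have sq_small : s * q < (n.+1%:R)^-1.
  apply: le_lt_trans sq_lt; rewrite lerDl.
  by apply: mulr_ge0 => //; apply: mulr_ge0; apply: ltW.
rewrite -[X in X <= _](_ : (V + 1) * (s * q) = q); last by rewrite /s; field; rewrite gt_eqF.
by rewrite ltW // ltr_pM2l.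
Qed.

Lemma min_seq_limit_repr w : S w ->
  (forall e : R, 0 < e -> exists N : nat, forall n : nat, (N <= n)%N ->
     ip (u n - w) (u n - w) < rc e) ->
  forall v, S v -> phi v = ip v w.
Proof.
move=> Sw u_cvg v Sv.
set b := ip v w - phi v.
suff : b * b^* = 0 by move/eqP; rewrite mul_conjC_eq0 subr_eq0 => /eqP.
apply: (nonneg_small_eq0 (mul_conjC_ge0 b)) => e e_gt0.
set V := ip v v.
have V_real : V = rc (complex.Re V) by rewrite RRe_real ?ger0_real ?S_pos.
have Vr_ge0 : 0 <= complex.Re V by rewrite -lecR -V_real rmorph0 S_pos.
set Vr := complex.Re V in V_real Vr_ge0.
have Vr1_gt0 : 0 < Vr + 1 by rewrite ltr_wpDl ?ltr01.
have e4_gt0 : 0 < e / 4%:R by rewrite divr_gt0 ?ltr0Sn.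
have [N1 hN1] := u_cvg _ (divr_gt0 e4_gt0 Vr1_gt0).
have [N2 hN2] := inv_succ_small e4_gt0 (ltW Vr1_gt0).
set n := maxn N1 N2.
set a := ip v (u n) - phi v; set c := ip v (u n - w).
have b_split : b = a + - c by rewrite /b /a /c (ipBr hip); ring.
have a_small : a * a^* < rc (e / 4%:R).
  apply: le_lt_trans (min_seq_variation n Sv) _.
  by rewrite -/V V_real -(rmorph1 (real_complex R)) -rmorphD hN2 ?leq_maxr.
have d_ge0 : 0 <= ip (u n - w) (u n - w) by apply/S_pos/subspaceB => //; apply: min_seq_in.
have c_small : c * c^* < rc (e / 4%:R).
  have cs : c * c^* <= V * ip (u n - w) (u n - w).
    apply: (cauchy_schwarz hip) => a' b'.
    by apply/S_pos/subspaceD; apply/subspaceZ => //; apply/subspaceB => //; apply: min_seq_in.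
  apply: le_lt_trans cs _; apply: (le_lt_trans (y := (V + 1) * ip (u n - w) (u n - w))).
    by rewrite ler_wpM2r // lerDl ler01.
  have -> : rc (e / 4%:R) = rc (Vr + 1) * rc (e / 4%:R / (Vr + 1)).
    by rewrite -rmorphM; congr rc; field; rewrite gt_eqF.
  rewrite V_real -(rmorph1 (real_complex R)) -rmorphD ltr_pM2l ?ltcR //.
  exact: hN1 (leq_maxl _ _).
rewrite b_split; apply: le_lt_trans (normC2_add_le a (- c)) _.
rewrite rmorphN /= mulrNN.
have -> : rc e = 2%:R * rc (e / 4%:R) + 2%:R * rc (e / 4%:R).
  by rewrite -(rmorph_nat (real_complex R)) -!rmorphM -rmorphD; congr rc; field.
by apply: ltrD; rewrite ltr_pM2l ?ltr0Sn.
Qed.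

Lemma riesz_complete : exists w, S w /\ forall x, S x -> phi x = ip x w.
Proof.
have [w [Sw u_cvg]] := S_complete min_seq_in min_seq_cauchy.
by exists w; split => //; apply: min_seq_limit_repr.
Qed.

End RieszComplete.

Section RieszSpan.
Variable R : realType.
Local Notation C := R[i].
Variables (X : lmodType C).

Definition inspan n (f : 'I_n -> X) x := exists c : 'I_n -> C, x = \sum_i c i *: f i.

Lemma inspan0 n (f : 'I_n -> X) : inspan f 0.
Proof. by exists (fun _ => 0); rewrite big1 // => i _; rewrite scale0r. Qed.

Lemma inspanD n (f : 'I_n -> X) x y : inspan f x -> inspan f y -> inspan f (x + y).
Proof.
move=> [c ->] [c' ->]; exists (fun i => c i + c' i).
by rewrite -big_split /=; apply: eq_bigr => i _; rewrite scalerDl.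
Qed.

Lemma inspanZ n (f : 'I_n -> X) a x : inspan f x -> inspan f (a *: x).
Proof.
move=> [c ->]; exists (fun i => a * c i).
by rewrite scaler_sumr; apply: eq_bigr => i _; rewrite scalerA.
Qed.

Definition extend_coef n (c : 'I_n -> C) (cn : C) (i : 'I_n.+1) : C :=
  if insub (val i) is Some j then c j else cn.

Lemma sum_extend_coef n (f : 'I_n.+1 -> X) c cn :
  \sum_i extend_coef c cn i *: f i =
  \sum_(i < n) c i *: f (widen_ord (leqnSn n) i) + cn *: f ord_max.
Proof.
rewrite big_ord_recr /=; congr (_ + _).
  apply: eq_bigr => i _; rewrite /extend_coef; case: insubP => [j _ ej|].
    by congr (_ *: _); congr c; apply: val_inj; rewrite ej.
  by rewrite /= ltn_ord.
rewrite /extend_coef; case: insubP => [j _ ej|//].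
by have := ltn_ord j; rewrite ej /= ltnn.
Qed.

(* Induction on the number of spanning vectors: the last one is orthogonalised
   against the span of the others. *)
Lemma riesz_span (q : X -> X -> C) (hq : hermitian_form q) n (f : 'I_n -> X)
  (phi : X -> C) : lin_functional phi ->
  (forall v, inspan f v -> v != 0 -> 0 < q v v) ->
  exists w, inspan f w /\ forall v, inspan f v -> phi v = q v w.
Proof.
elim: n f phi => [|n IH] f phi phi_lin q_pos.
  exists 0; split; first exact: inspan0.
  by move=> v [c ->]; rewrite big_ord0 (ip0r hq) (lfun0 phi_lin).
pose f' i := f (widen_ord (leqnSn n) i); pose fn := f ord_max.
have span' x : inspan f' x -> inspan f x.
  by move=> [c ->]; exists (extend_coef c 0); rewrite sum_extend_coef scale0r addr0.
have fn_in : inspan f fn.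
  exists (extend_coef (fun _ => 0) 1); rewrite sum_extend_coef scale1r big1 ?add0r //.
  by move=> i _; rewrite scale0r.
have split_span v : inspan f v -> exists v' a, inspan f' v' /\ v = v' + a *: fn.
  move=> [c ->]; rewrite big_ord_recr /=.
  by exists (\sum_(i < n) c (widen_ord (leqnSn n) i) *: f' i), (c ord_max); split => //; eexists.
have q_pos' v : inspan f' v -> v != 0 -> 0 < q v v by move=> /span'; apply: q_pos.
have [w' [w'_in w'_repr]] := IH f' phi phi_lin q_pos'.
have [p [p_in p_repr]] := IH f' (q^~ fn) (form_lfun hq fn) q_pos'.
set g := fn - p.
have g_orth x : inspan f' x -> q x g = 0 by move=> x_in; rewrite (ipBr hq) p_repr // subrr.
have g_orth' x : inspan f' x -> q g x = 0 by move=> x_in; rewrite (ipC hq) g_orth // conjC0.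
have g_in : inspan f g.
  by apply: inspanD => //; rewrite -scaleN1r; apply/inspanZ/span'.
have [/eqP g_eq0 | g_neq0] := boolP (g == 0).
  have fnE : fn = p by apply/eqP; rewrite -subr_eq0 -/g g_eq0.
  exists w'; split; first exact: span'.
  move=> v /split_span [v' [a [v'_in ->]]]; rewrite fnE; apply: w'_repr.
  by apply: inspanD => //; apply: inspanZ.
have gg_neq0 : q g g != 0 by rewrite gt_eqF ?q_pos.
exists (w' + (phi g / q g g)^* *: g); split.
  by apply: inspanD; [apply: span' | apply: inspanZ].
move=> v /split_span [v' [a [v'_in ->]]].
have -> : v' + a *: fn = (v' + a *: p) + a *: g.
  by rewrite /g scalerBr -addrA (addrC (a *: p)) subrK.
have vp_in : inspan f' (v' + a *: p) by apply: inspanD => //; apply: inspanZ.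
clearbody g.
rewrite (lfunD phi_lin) (lfunZ phi_lin) (w'_repr _ vp_in).
rewrite !(ipDl hq, ipDr hq, ipZl hq, ipZr hq) (g_orth v') // (g_orth p) // (g_orth' w') //.
by rewrite conjCK; field.
Qed.

End RieszSpan.

(** * Pontryagin spaces *)

Section Pontryagin.
Variable R : realType.
Local Notation C := R[i].
Local Notation rc := (real_complex R).

Lemma adj_bounded_pos (X : lmodType C) (j : X -> X -> C) (hj : hermitian_form j)
  (j_ge0 : forall x, 0 <= j x x) (T S : X -> X) (TS : forall x y, j (T x) y = j x (S y))
  (M : R) (T_bdd : forall x, j (T x) (T x) <= rc M * j x x) :
  forall y, j (S y) (S y) <= rc (Num.max M 0) * j y y.
Proof.
move=> y; set a := S y.
have M_le : rc M <= rc (Num.max M 0) by rewrite lecR le_max lexx.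
have M_ge0 : 0 <= rc (Num.max M 0) by rewrite -(rmorph0 (real_complex R)) lecR le_max lexx orbT.
have [-> | a_neq0] := eqVneq (j a a) 0; first by rewrite mulr_ge0.
have a_gt0 : 0 < j a a by rewrite lt_def a_neq0 j_ge0.
have cs := cauchy_schwarz hj (x := T a) (y := y) (fun _ _ => j_ge0 _).
rewrite TS -/a (CrealP (ger0_real (j_ge0 a))) in cs.
have : j a a * j a a <= rc M * j a a * j y y.
  by apply: le_trans cs _; rewrite ler_wpM2r.
rewrite mulrAC ler_pM2r // => aa_le.
by apply: le_trans aa_le _; rewrite ler_wpM2r.
Qed.

Variables (X : lmodType C) (ip : X -> X -> C) (hip : hermitian_form ip).
Variable (P : X -> X) (hP : fundamental_proj ip P).

Lemma fproj_lin : lin_map P. Proof. by case: hP => [[]]. Qed.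
Lemma fproj_idem x : P (P x) = P x. Proof. by case: hP => [[]]. Qed.
Lemma fproj_orth x y : ip (P x) (y - P y) = 0. Proof. by case: hP. Qed.
Lemma fproj_orth' x y : ip (y - P y) (P x) = 0.
Proof. by rewrite (ipC hip) fproj_orth conjC0. Qed.
Lemma fproj_compl x : P (x - P x) = 0.
Proof. by rewrite (linB fproj_lin) fproj_idem subrr. Qed.

Lemma ip_fsplit x y : ip x y = ip (P x) (P y) + ip (x - P x) (y - P y).
Proof.
have -> : ip x y = ip (P x + (x - P x)) (P y + (y - P y)).
  by rewrite (addrC (P x)) (addrC (P y)) !subrK.
by rewrite (ipDl hip) !(ipDr hip (P y) (y - P y)) fproj_orth fproj_orth' addr0 add0r.
Qed.

Lemma ip_fproj_ge0 x : 0 <= ip (P x) (P x).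
Proof.
case: hP => _ _ pos _ _; have [-> | Px_neq0] := eqVneq (P x) 0; first by rewrite (ip0l hip).
by apply/ltW/pos; rewrite ?fproj_idem.
Qed.

Lemma ip_fcompl_le0 x : ip (x - P x) (x - P x) <= 0.
Proof.
case: hP => _ _ _ [neg _] _; have [-> | neq0] := eqVneq (x - P x) 0; first by rewrite (ip0l hip).
by apply/ltW/neg; rewrite ?fproj_compl.
Qed.

Lemma pontryagin_nondeg : nondegenerate ip.
Proof.
move=> u v uv; apply/eqP; rewrite -subr_eq0; set d := u - v.
have d_orth x : ip x d = 0 by rewrite (ipBr hip) uv subrr.
case: (hP) => _ _ pos [neg _] _.
have Pd : P d = 0.
  apply/eqP/negPn/negP => Pd_neq0.
  have PdPd : ip (P d) (P d) = ip (P d) d.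
    by rewrite [RHS]ip_fsplit fproj_idem subrr (ip0l hip) addr0.
  by have := pos _ (fproj_idem d) Pd_neq0; rewrite PdPd d_orth ltxx.
apply/negPn/negP => d_neq0.
by have := neg _ Pd d_neq0; rewrite d_orth ltxx.
Qed.

Definition jip x y := ip (P x) (P y) - ip (x - P x) (y - P y).

Lemma jip_herm : hermitian_form jip.
Proof.
split; last by move=> x y; rewrite /jip rmorphB /= -!(ipC hip).
move=> a x y z; rewrite /jip (fproj_lin a x y) !(ipDl hip, ipZl hip, ipNl hip); ring.
Qed.

Lemma jip_ge0 x : 0 <= jip x x.
Proof. by rewrite /jip subr_ge0; apply: le_trans (ip_fcompl_le0 x) (ip_fproj_ge0 x). Qed.

Lemma ip_normC2_le x y : ip x y * (ip x y)^* <= 2%:R * (jip x x * jip y y).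
Proof.
rewrite ip_fsplit; set A := ip (P x) (P y); set B := ip (x - P x) (y - P y).
set a1 := ip (P x) (P x); set b1 := ip (P y) (P y).
set a2 := - ip (x - P x) (x - P x); set b2 := - ip (y - P y) (y - P y).
have [a1_ge0 b1_ge0] : 0 <= a1 /\ 0 <= b1 by split; apply: ip_fproj_ge0.
have [a2_ge0 b2_ge0] : 0 <= a2 /\ 0 <= b2 by split; rewrite oppr_ge0 ip_fcompl_le0.
have csA : A * A^* <= a1 * b1.
  apply: (cauchy_schwarz hip) => a b.
  by rewrite -!(linZ fproj_lin) -(linD fproj_lin) ip_fproj_ge0.
have csB : B * B^* <= a2 * b2.
  rewrite -mulrNN -rmorphN; apply: (cauchy_schwarz (oppform_herm hip)) => a b.
  have -> : a *: (x - P x) + b *: (y - P y) = (a *: x + b *: y) - P (a *: x + b *: y).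
    by rewrite (linD fproj_lin) !(linZ fproj_lin) !scalerBr opprD addrACA.
  by rewrite oppr_ge0 ip_fcompl_le0.
apply: le_trans (normC2_add_le A B) _.
rewrite -mulrDr ler_pM2l ?ltr0Sn // /jip -/a1 -/b1 -!/(_ - _) -/a2 -/b2.
apply: le_trans (lerD csA csB) _.
by rewrite mulrDr !mulrDl -!addrA lerD2l addrA lerDr addr_ge0 // mulr_ge0.
Qed.

Lemma riesz_pontryagin (phi : X -> C) (phi_lin : lin_functional phi) (M : R)
  (phi_bdd : forall x, phi x * (phi x)^* <= rc M * jip x x) :
  exists w, forall x, phi x = ip x w.
Proof.
case: hP => _ _ _ [neg [n [e e_span]]] complete.
have [wp [Pwp wp_repr]] : exists w, P w = w /\ forall x, P x = x -> phi x = ip x w.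
  apply: (riesz_complete hip _ _ _ complete phi_lin (M := M)).
  - exact: (lin0 fproj_lin).
  - by move=> a x y Px Py; rewrite (fproj_lin a x y) Px Py.
  - by move=> x <-; apply: ip_fproj_ge0.
  - by move=> x Px; apply: le_trans (phi_bdd x) _; rewrite /jip Px subrr (ip0l hip) subr0.
pose f i := e i - P (e i).
have [wm [[cm wmE] wm_repr]] :
    exists w, inspan f w /\ forall v, inspan f v -> phi v = - ip v w.
  apply: (riesz_span (oppform_herm hip)) => // v [c ->] v_neq0.
  rewrite oppr_gt0; apply: neg => //.
  by rewrite (lin_sum fproj_lin) big1 // => i _; rewrite fproj_compl scaler0.
have Pwm : P wm = 0.
  by rewrite wmE (lin_sum fproj_lin) big1 // => i _; rewrite fproj_compl scaler0.
exists (wp - wm) => x.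
have compl_in : inspan f (x - P x).
  have [c xE] := e_span x; exists c.
  have sumP0 : \sum_i c i *: P (e i) = 0 by rewrite -(lin_sum fproj_lin) -xE fproj_compl.
  rewrite -[LHS]subr0 -[in LHS]sumP0 xE -sumrB.
  by apply: eq_bigr => i _; rewrite scalerBr.
rewrite -{1}(subrK (P x) x) addrC (lfunD phi_lin) wp_repr ?fproj_idem // wm_repr //.
rewrite (ipBr hip) (ip_fsplit x wp) (ip_fsplit x wm) Pwp Pwm !subr0.
by rewrite subrr !(ip0r hip) addr0 add0r.
Qed.

Lemma pontryagin_adj_ex (T : X -> X) (T_lin : lin_map T) (M : R)
  (T_bdd : forall x, jip (T x) (T x) <= rc M * jip x x) : exists S, is_adj ip ip T S.
Proof.
have adj_repr y : exists w, forall x, ip (T x) y = ip x w.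
  have phi_lin : lin_functional (ip^~ y \o T).
    by move=> a x z; rewrite /= T_lin (ipDl hip) (ipZl hip).
  apply: (riesz_pontryagin phi_lin (M := 2%:R * Num.max M 0 * complex.Re (jip y y))) => x /=.
  apply: le_trans (ip_normC2_le (T x) y) _.
  rewrite !rmorphM /= rmorph_nat RRe_real ?ger0_real ?jip_ge0 // -!mulrA ler_pM2l ?ltr0Sn //.
  rewrite mulrCA [jip _ _ * _]mulrC ler_wpM2l ?jip_ge0 //.
  by apply: le_trans (T_bdd x) _; rewrite ler_wpM2r ?jip_ge0 // lecR le_max lexx.
exists (fun y => proj1_sig (constructive_indefinite_description _ (adj_repr y))).
by move=> x y; case: constructive_indefinite_description.
Qed.

Definition fsym x := P x *+ 2 - x.

Lemma fsymK x : fsym (fsym x) = x.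
Proof.
have P_fsym : P (fsym x) = P x.
  by rewrite /fsym (linB fproj_lin) mulr2n (linD fproj_lin) fproj_idem addrK.
by rewrite {1}/fsym P_fsym /fsym opprB addrC subrK.
Qed.

Lemma jip_fsym x y : jip x y = ip x (fsym y).
Proof.
rewrite /fsym (ipBr hip) mulr2n (ipDr hip) (ip_fsplit x (P y)) fproj_idem subrr (ip0r hip).
by rewrite addr0 (ip_fsplit x y) /jip; ring.
Qed.

Lemma jip_fsym2 u : jip (fsym u) (fsym u) = jip u u.
Proof.
by rewrite {1}jip_fsym fsymK (ipC hip) -jip_fsym; apply/CrealP/ger0_real/jip_ge0.
Qed.

Lemma pontryagin_adj_bounded (T S : X -> X) (TS : is_adj ip ip T S) (M : R)
  (T_bdd : forall x, jip (T x) (T x) <= rc M * jip x x) :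
  forall y, jip (S y) (S y) <= rc (Num.max M 0) * jip y y.
Proof.
have jTS x y : jip (T x) y = jip x (fsym (S (fsym y))).
  by rewrite jip_fsym TS -{1}(fsymK (S (fsym y))) -jip_fsym.
move=> y; have := adj_bounded_pos jip_herm jip_ge0 jTS T_bdd (fsym y).
by rewrite fsymK !jip_fsym2.
Qed.

End Pontryagin.

(** * Resolvents, adjoints and inverses *)

Section Operators.
Variable R : realType.
Local Notation C := R[i].
Local Notation rc := (real_complex R).

Lemma resolvE (K : lmodType C) (A : K -> K -> Prop) z T :
  is_resolvent A z T -> resolv A z = T.
Proof.
move=> T_res; have [_ T_rng] := T_res.
have [res_dom _] : is_resolvent A z (resolv A z).
  by rewrite /resolv; apply: epsilon_spec; exists T.
by apply: functional_extensionality => k; have := res_dom _ _ (T_rng k); rewrite addrK.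
Qed.

Lemma in_rho_resolvent (K : lmodType C) ipK (A : K -> K -> Prop) z :
  in_rho ipK A z -> [/\ is_resolvent A z (resolv A z), lin_map (resolv A z) &
     bounded_KK ipK (resolv A z)].
Proof. by move=> [T [T_res [T_lin T_bdd]]]; rewrite (resolvE T_res). Qed.

Lemma inv_opE (X : Type) (f g : X -> X) : is_inv f g -> inv_op f = g.
Proof.
move=> [fK gK]; have [invK _] : is_inv f (inv_op f).
  by rewrite /inv_op; apply: epsilon_spec; exists g.
by apply: functional_extensionality => x; rewrite -{1}(gK x) invK.
Qed.

Section Adjoints.
Variables (X Y : lmodType C) (ipX : X -> X -> C) (ipY : Y -> Y -> C).
Variables (hipX : hermitian_form ipX) (hipY : hermitian_form ipY) (ndX : nondegenerate ipX).

Lemma adjE f g : is_adj ipX ipY f g -> adj ipX ipY f = g.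
Proof.
move=> fg; have f_adj : is_adj ipX ipY f (adj ipX ipY f).
  by rewrite /adj; apply: epsilon_spec; exists g.
by apply: functional_extensionality => y; apply: ndX => x; rewrite -fg -f_adj.
Qed.

Lemma adj_lin f g : is_adj ipX ipY f g -> lin_map g.
Proof.
move=> fg a y y'; apply: ndX => x.
by rewrite -fg (ipDr hipY) (ipZr hipY) !fg (ipDr hipX) (ipZr hipX).
Qed.

Lemma is_adj_sym f g : is_adj ipX ipY f g -> is_adj ipY ipX g f.
Proof. by move=> fg y x; rewrite (ipC hipX) -fg -(ipC hipY). Qed.

End Adjoints.

Lemma resolvent_adj (K : lmodType C) (ipK : K -> K -> C) (hipK : hermitian_form ipK)
  (ndK : nondegenerate ipK) (A : K -> K -> Prop) (A_sa : selfadjoint ipK A) z T S :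
  is_resolvent A z T -> is_adj ipK ipK T S -> is_resolvent A z^* S.
Proof.
move=> [T_dom T_rng] TS; split.
  move=> f g Afg; apply: ndK => x.
  rewrite -TS (ipBr hipK) (ipZr hipK) conjCK.
  have := (A_sa f g).1 Afg (T x) (x + z *: T x) (T_rng x).
  by rewrite (ipDl hipK) (ipZl hipK) => <-; ring.
move=> k; apply/(A_sa (S k) (k + z^* *: S k)).2 => h h' Ahh'.
have := TS (h' - z *: h) k; rewrite T_dom // (ipBl hipK) (ipZl hipK) => hk.
by rewrite (ipDr hipK) (ipZr hipK) conjCK hk; ring.
Qed.

Lemma in_rho_conj (K : lmodType C) (ipK : K -> K -> C) (hK : pontryagin ipK)
  (A : K -> K -> Prop) (A_sa : selfadjoint ipK A) z :
  in_rho ipK A z -> in_rho ipK A z^* /\ is_adj ipK ipK (resolv A z) (resolv A z^*).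
Proof.
case: hK => hipK [P0 _] /in_rho_resolvent [T_res T_lin [P [hP [M T_bdd]]]].
have ndK := pontryagin_nondeg hipK hP.
have [S TS] := pontryagin_adj_ex hipK hP T_lin T_bdd.
have S_res := resolvent_adj hipK ndK A_sa T_res TS.
rewrite (resolvE S_res); split => //.
exists S; split; first exact: S_res.
split; first exact: (adj_lin hipK hipK ndK TS).
exists P; split => //; exists (Num.max M 0).
exact: (pontryagin_adj_bounded hipK hP TS T_bdd).
Qed.

Section Hilbert.
Variables (H : lmodType C) (ipH : H -> H -> C) (hH : hilbert ipH).

Lemma hilbert_herm : hermitian_form ipH. Proof. by case: hH. Qed.

Lemma hilbert_nondeg : nondegenerate ipH.
Proof. by case: hH => hip pos _; apply: pos_form_nondeg. Qed.

Lemma hilbert_ge0 x : 0 <= ipH x x.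
Proof.
case: hH => hip pos _; have [-> | /pos/ltW //] := eqVneq x 0.
by rewrite (ip0l hip).
Qed.

Lemma hilbert_adj_ex (T : H -> H) : lin_map T -> bounded_HH ipH T ->
  exists S, is_adj ipH ipH T S.
Proof.
case: (hH) => hip _ complete T_lin [M T_bdd].
have adj_repr y : exists w, forall x, ipH (T x) y = ipH x w.
  have phi_lin : lin_functional (ipH^~ y \o T).
    by move=> a x z; rewrite /= T_lin (ipDl hip) (ipZl hip).
  have phi_bdd x : True -> (ipH (T x) y) * (ipH (T x) y)^* <=
      rc (Num.max M 0 * complex.Re (ipH y y)) * ipH x x.
    move=> _; apply: le_trans (cauchy_schwarz hip (fun _ _ => hilbert_ge0 _)) _.
    rewrite rmorphM /= RRe_real ?ger0_real ?hilbert_ge0 // mulrAC ler_wpM2r ?hilbert_ge0 //.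
    by apply: le_trans (T_bdd x) _; rewrite ler_wpM2r ?hilbert_ge0 // lecR le_max lexx.
  have [w [_ w_repr]] := riesz_complete hip I (fun _ _ _ _ _ => I)
    (fun x _ => hilbert_ge0 x) complete phi_lin phi_bdd.
  by exists w => x; apply: w_repr.
exists (fun y => proj1_sig (constructive_indefinite_description _ (adj_repr y))).
by move=> x y; case: constructive_indefinite_description.
Qed.

Lemma bdd_invertible_inv_op (F : H -> H) : bdd_invertible ipH F -> is_inv F (inv_op F).
Proof. by case=> g [g_inv _]; rewrite (inv_opE g_inv). Qed.

Lemma bdd_invertible_adj (F F' : H -> H) : is_adj ipH ipH F F' ->
  bdd_invertible ipH F ->
  bdd_invertible ipH F' /\ is_adj ipH ipH (inv_op F) (inv_op F').
Proof.
move=> FF' [g [[FK gK] [g_lin [M g_bdd]]]].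
have [g' gg'] := hilbert_adj_ex g_lin (ex_intro _ M g_bdd).
have ndH := hilbert_nondeg.
have g'_inv : is_inv F' g'.
  split=> h; apply: ndH => x; first by rewrite -gg' -FF' gK.
  by rewrite -FF' -gg' FK.
rewrite (inv_opE g'_inv) (inv_opE (conj FK gK)); split => //.
exists g'; split => //; split; first exact: (adj_lin hilbert_herm hilbert_herm ndH gg').
exists (Num.max M 0).
exact: (adj_bounded_pos hilbert_herm hilbert_ge0 gg' g_bdd).
Qed.

End Hilbert.

End Operators.

(** * The realization of Q and of Qhat *)

Section Realization.
Variable R : realType.
Local Notation C := R[i].
Variables (H K : lmodType C) (ipH : H -> H -> C) (ipK : K -> K -> C).
Hypotheses (hipH : hermitian_form ipH) (hipK : hermitian_form ipK) (ndH : nondegenerate ipH).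
Variables (A Ah : K -> K -> Prop) (z0 : C) (Gam : H -> K) (Ga : K -> H).
Hypotheses (Gam_lin : lin_map Gam) (Ga_lin : lin_map Ga) (GamGa : is_adj ipH ipK Gam Ga).
Variables (Q : C -> H -> H) (Q0a : H -> H).

(* The adjoint of [Gam_z A z0 Gam w^*], expressed through the resolvent at [w]
   (see [Gam_z_adj]). *)
Definition Gam_zbar_adj (w : C) (k : K) : H := Ga (k + (w - z0^*) *: resolv A w k).

Definition Q_realized (w : C) : Prop :=
  forall h, Q w h = Q0a h + (w - z0^*) *: Ga (Gam_z A z0 Gam w h).

Hypotheses (Q0_lin : lin_map (Q z0)) (Q0_inv : is_inv (Q z0) (inv_op (Q z0)))
  (Q0_realized : Q_realized z0).

Lemma Gam_z_lin w : lin_map (resolv A w) -> lin_map (Gam_z A z0 Gam w).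
Proof.
move=> R_lin a h h'; rewrite /Gam_z Gam_lin R_lin !scalerDr !scalerA mulrC.
by rewrite -!addrA; congr (_ + _); rewrite addrCA.
Qed.

Lemma Gam_z_adj w : is_adj ipK ipK (resolv A w^*) (resolv A w) ->
  is_adj ipH ipK (Gam_z A z0 Gam w^*) (Gam_zbar_adj w).
Proof.
move=> RR h k; rewrite /Gam_z /Gam_zbar_adj -GamGa (ipDr hipK) (ipZr hipK).
by rewrite (ipDl hipK) (ipZl hipK) RR rmorphB /= conjCK.
Qed.

Lemma Q_sub_Q0 w : Q_realized w ->
  forall h, Q w h - Q z0 h = (w - z0) *: Gam_zbar_adj w (Gam h).
Proof.
move=> Qw h; rewrite Qw Q0_realized /Gam_z /Gam_zbar_adj subrr scale0r addr0.
rewrite opprD addrACA subrr add0r.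
rewrite !(linD Ga_lin) !(linZ Ga_lin) !scalerDr !scalerA addrAC -scalerBl.
by rewrite [(w - z0^*) * _]mulrC; congr (_ *: _ + _); ring.
Qed.

Lemma Q_conj_adj z : Q_realized z -> Q_realized z^* ->
  is_adj ipH ipH Q0a (Q z0) -> is_adj ipK ipK (resolv A z) (resolv A z^*) ->
  is_adj ipH ipH (Q z) (Q z^*).
Proof.
move=> Qz Qzc Q0a_adj RR h h'.
have GaGam := is_adj_sym hipH hipK GamGa.
rewrite Qz Qzc (ipDl hipH) (ipZl hipH) Q0a_adj Q0_realized /Gam_z.
rewrite !(ipDr hipH) !(ipZr hipH) !GaGam (ipC hipH (Ga _) h) GaGam -(ipC hipK).
rewrite (ipC hipH (Ga _) h) GaGam -(ipC hipK).
rewrite !(ipDl hipK, ipDr hipK, ipZl hipK, ipZr hipK) RR !rmorphB /= !conjCK; ring.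
Qed.

Lemma resolv_AhE w : is_adj ipK ipK (resolv A w^*) (resolv A w) ->
  is_resolvent Ah w (fun k => resolv A w k
    + Gam_z A z0 Gam w (Qhat Q w (adj ipH ipK (Gam_z A z0 Gam w^*) k))) ->
  resolv Ah w = (fun k => resolv A w k + Gam_z A z0 Gam w (Qhat Q w (Gam_zbar_adj w k))).
Proof. by move=> RR /resolvE ->; rewrite (adjE ndH (Gam_z_adj RR)). Qed.

Lemma Gamh_z_eq w : in_rho ipK A w -> lin_map (Q w) -> bdd_invertible ipH (Q w) ->
  Q_realized w -> is_adj ipK ipK (resolv A w^*) (resolv A w) ->
  is_resolvent Ah w (fun k => resolv A w k
    + Gam_z A z0 Gam w (Qhat Q w (adj ipH ipK (Gam_z A z0 Gam w^*) k))) ->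
  forall h, Gam_z Ah z0 (fun h => Gam (Qhat Q z0 h)) w h = Gam_z A z0 Gam w (Qhat Q w h).
Proof.
move=> /in_rho_resolvent [_ R_lin _] Qw_lin /bdd_invertible_inv_op [QwK QwK'] Qw RR.
move=> /(resolv_AhE RR) Ah_res h; rewrite {1}/Gam_z Ah_res /Qhat.
set v := - inv_op (Q z0) h; set y := - inv_op (Q w) (Gam_zbar_adj w (Gam v)).
have Q0v : Q z0 v = - h by rewrite /v (linN Q0_lin) (Q0_inv.2).
have Qy : Q w y = - Gam_zbar_adj w (Gam v) by rewrite /y (linN Qw_lin) QwK'.
have -> : - inv_op (Q w) h = v + (w - z0) *: y.
  apply: (can_inj QwK); rewrite (linN Qw_lin) QwK' (linD Qw_lin) (linZ Qw_lin) Qy.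
  by rewrite -[Q w v](subrK (Q z0 v)) Q_sub_Q0 // Q0v scalerN addrAC subrr add0r.
by rewrite (linD (Gam_z_lin R_lin)) (linZ (Gam_z_lin R_lin)) /Gam_z scalerDr addrA.
Qed.

Lemma Gamh_zbar_adj z (Gh : H -> K) :
  is_adj ipH ipH (inv_op (Q z^*)) (inv_op (Q z)) ->
  is_adj ipH ipK (Gam_z A z0 Gam z^*) (Gam_zbar_adj z) ->
  (forall h, Gh h = Gam_z A z0 Gam z^* (Qhat Q z^* h)) ->
  is_adj ipH ipK Gh (fun k => Qhat Q z (Gam_zbar_adj z k)).
Proof.
move=> inv_adj Gz_adj GhE h k.
by rewrite GhE Gz_adj /Qhat (ipNl hipH) (ipNr hipH) inv_adj.
Qed.

Lemma resolv_A_eq z (Gh : H -> K) (Gh' : K -> H) :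
  in_rho ipK A z -> lin_map (Q z) -> bdd_invertible ipH (Q z) ->
  is_adj ipK ipK (resolv A z^*) (resolv A z) ->
  is_resolvent Ah z (fun k => resolv A z k
    + Gam_z A z0 Gam z (Qhat Q z (adj ipH ipK (Gam_z A z0 Gam z^*) k))) ->
  (forall h, Gh h = Gam_z A z0 Gam z (Qhat Q z h)) ->
  (forall k, Gh' k = Qhat Q z (Gam_zbar_adj z k)) ->
  resolv A z = (fun k => resolv Ah z k + Gh (Q z (Gh' k))).
Proof.
move=> /in_rho_resolvent [_ R_lin _] Qz_lin /bdd_invertible_inv_op [QzK QzK'] RR.
move=> /(resolv_AhE RR) Ah_res GhE Gh'E.
apply: functional_extensionality => k; rewrite Ah_res GhE Gh'E.
rewrite {2}/Qhat (linN Qz_lin) QzK' -[in - Gam_zbar_adj z k](QzK' (Gam_zbar_adj z k)).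
by rewrite -(linN Qz_lin) QzK opprK /Qhat (linN (Gam_z_lin R_lin)) subrK.
Qed.

End Realization.

Unset Implicit Arguments.
Theorem lemma3p8 (R : realType)
  (H : lmodType R[i]) (ipH : H -> H -> R[i]) (hH : hilbert ipH)
  (K : lmodType R[i]) (ipK : K -> K -> R[i]) (hK : pontryagin ipK)
  (A : K -> K -> Prop) (hAlin : linrel A) (hAsa : selfadjoint ipK A)
  (z0 : R[i]) (hz0 : 0 < 'Im z0) (hz0rho : in_rho ipK A z0)
  (Gam : H -> K) (hGlin : lin_map Gam) (hGbdd : bounded_HK ipH ipK Gam)
  (hGadj : has_adj ipH ipK Gam)
  (Q : R[i] -> H -> H)
  (hQop : forall z, in_rho ipK A z -> lin_map (Q z) /\ bounded_HH ipH (Q z))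
  (hQ0adj : has_adj ipH ipH (Q z0))
  (hQreal : forall z, in_rho ipK A z ->
     Q z = (fun h => adj ipH ipH (Q z0) h
                     + (z - z0^*) *: adj ipH ipK Gam (Gam_z A z0 Gam z h)))
  (hQ0inv : bdd_invertible ipH (Q z0))
  (Ah : K -> K -> Prop) (hAhlin : linrel Ah)
  (hAh : forall z, in_rho ipK A z -> bdd_invertible ipH (Q z) ->
     is_resolvent Ah z (fun k => resolv A z k
        + Gam_z A z0 Gam z (Qhat Q z (adj ipH ipK (Gam_z A z0 Gam z^*) k)))) :
  let Gamh : H -> K := fun h => Gam (Qhat Q z0 h) in
  forall z, in_rho ipK A z -> in_rho ipK Ah z -> bdd_invertible ipH (Q z) ->
    Gam_z Ah z0 Gamh z = (fun h => Gam_z A z0 Gam z (Qhat Q z h)) /\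
    resolv A z = (fun k => resolv Ah z k
        + Gam_z Ah z0 Gamh z (Q z (adj ipH ipK (Gam_z Ah z0 Gamh z^*) k))).
Proof.
move=> Gamh z Az _ Qz_inv.
have [hipH ndH] := (hilbert_herm hH, hilbert_nondeg hH).
have [hipK _] := hK.
have [Azc RR] := in_rho_conj hK hAsa Az.
have RRc := is_adj_sym hipK hipK RR.
have RRcc : is_adj ipK ipK (resolv A z^*^*) (resolv A z^*) by rewrite conjCK.
have [Ga GamGa] := hGadj; have [Q0a Q0Q0a] := hQ0adj.
have Ga_lin := adj_lin hipH hipK ndH GamGa.
have realized w : in_rho ipK A w -> Q_realized A z0 Gam Ga Q Q0a w.
  by move=> Aw h; rewrite hQreal // (adjE ndH GamGa) (adjE ndH Q0Q0a).
have Q_adj := Q_conj_adj hipH hipK GamGa (realized z0 hz0rho) (realized z Az)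
  (realized z^* Azc) (is_adj_sym hipH hipH Q0Q0a) RR.
have [Qzc_inv inv_adj] := bdd_invertible_adj hH Q_adj Qz_inv.
have Gamh_zE w (Aw : in_rho ipK A w) Qw_inv RwR :=
  Gamh_z_eq hipK ndH hGlin Ga_lin GamGa (hQop z0 hz0rho).1
    (bdd_invertible_inv_op hQ0inv) (realized z0 hz0rho) Aw (hQop w Aw).1 Qw_inv
    (realized w Aw) RwR (hAh w Aw Qw_inv).
split; first exact/functional_extensionality/(Gamh_zE z Az Qz_inv RRc).
apply: (resolv_A_eq hipK ndH hGlin GamGa Az (hQop z Az).1 Qz_inv RRc (hAh z Az Qz_inv)).
  exact: Gamh_zE z Az Qz_inv RRc.
have Gamh_zc_adj := Gamh_zbar_adj hipH (is_adj_sym hipH hipH inv_adj)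
  (Gam_z_adj hipK z0 GamGa RRc) (Gamh_zE _ Azc Qzc_inv RRcc).
by move=> k; rewrite (adjE ndH Gamh_zc_adj).
Qed.
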